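(* For all positive integers $b_1,\dots,b_k$, $$\operatorname{op}_{[b_1,\dots,b_k]}(123)=\operatorname{op}_{[b_1,\dots,b_k]}(132).$$
   Context: An ordered set partition of $[N]$ into $k$ blocks is a sequence $B_1/B_2/\cdots/B_k$ of nonempty, pairwise disjoint subsets of $[N]$ whose union is $[N]$; the order of the blocks matters, but not the order of elements within a block. For a permutation $\rho=\rho_1\cdots\rho_m\in\mathcal{S}_m$, an ordered partition $B_1/\cdots/B_k$ contains $\rho$ if there are block indices $i_1<i_2<\cdots<i_m$ and elements $b_j\in B_{i_j}$ such that $b_1\cdots b_m$ is order-isomorphic to $\rho$ (i.e. $b_a<b_c$ iff $\rho_a<\rho_c$); otherwise it avoids $\rho$. For positive integers $b_1,\dots,b_k$, $\operatorname{op}_{[b_1,\dots,b_k]}(\rho)$ is the number of $\rho$-avoiding ordered partitions $B_1/\cdots/B_k$ of $[b_1+\cdots+b_k]$ with $|B_i|=b_i$ for all $i$. *)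

From mathcomp Require Import all_boot all_fingroup.
Set Implicit Arguments. Unset Strict Implicit. Unset Printing Implicit Defensive.

(* [N] is modelled by 'I_N = {0,...,N-1} (order-isomorphic to {1,...,N}).
   An ordered set partition B_1/.../B_k is a k-indexed family of subsets. *)
Definition ordered_set_partition (N k : nat) (B : {ffun 'I_k -> {set 'I_N}}) : bool :=
  [&& [forall i, B i != set0],
      [forall i, forall j, (i != j) ==> [disjoint B i & B j]]
    & (\bigcup_(i < k) B i == [set: 'I_N])].

Definition contains_pattern (N k m : nat) (B : {ffun 'I_k -> {set 'I_N}})
    (rho : {perm 'I_m}) : bool :=
  [exists ix : {ffun 'I_m -> 'I_k}, exists e : {ffun 'I_m -> 'I_N},
     [&& [forall a : 'I_m, forall c : 'I_m, (a < c) ==> (ix a < ix c)],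
         [forall j : 'I_m, e j \in B (ix j)]
       & [forall a : 'I_m, forall c : 'I_m, (e a < e c) == (rho a < rho c)]]].

Definition op (k : nat) (b : 'I_k -> nat) (m : nat) (rho : {perm 'I_m}) : nat :=
  #|[set B : {ffun 'I_k -> {set 'I_(\sum_(i < k) b i)}} |
      [&& ordered_set_partition B,
          [forall i, #|B i| == b i]
        & ~~ contains_pattern B rho]]|.

(* the patterns 123 and 132 in S_3 (0-indexed: 012 and 021) *)
Definition pat123 : {perm 'I_3} := 1%g.
Definition pat132 : {perm 'I_3} := tperm (@Ordinal 3 1 isT) (@Ordinal 3 2 isT).

From mathcomp Require Import all_boot all_fingroup zify.
Set Implicit Arguments. Unset Strict Implicit. Unset Printing Implicit Defensive.

(* An ordered set partition B_1/.../B_k of [N] is the word w on [k] with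
   w x = i iff x \in B_i; block sizes become letter multiplicities, and
   containing 123 (resp. 132) becomes having positions p < q < l with
   w p < w q < w l (resp. w p < w l < w q).  A word avoids 123 iff, after each
   letter x, the letters exceeding x weakly decrease, and avoids 132 iff they
   weakly increase.  Count the arrangements of a fixed multiset by their first
   letter while tracking the running minimum t of the prefix: a first letter at
   most t becomes the new minimum, whereas a first letter above t is forced, being
   the largest remaining letter above t on the 123 side and the smallest on the
   132 side.  Hence only the letters up to t and the number of letters above t
   matter, and induction gives equal counts.  Nothing depends on >= and <= beyond
   their being total orders. *)

Section Avoidance.

Variable r : rel nat.

Definition pairwise_above (t : nat) (s : seq nat) : bool :=
  pairwise (fun y z => (t < y) ==> (t < z) ==> r y z) s.

(* [avoids geq] is 123-avoidance and [avoids leq] is 132-avoidance. *)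
Fixpoint avoids (s : seq nat) : bool :=
  if s is x :: u then pairwise_above x u && avoids u else true.

Definition avoids_above (t : nat) (s : seq nat) : bool :=
  avoids s && pairwise_above t s.

Lemma pairwise_above_mono t1 t2 s :
  t1 <= t2 -> pairwise_above t1 s -> pairwise_above t2 s.
Proof.
by move=> le_t12; apply: sub_pairwise => y z; lia.
Qed.

Lemma pairwise_above_le t s : all (fun y => y <= t) s -> pairwise_above t s.
Proof.
move=> /allP s_le; apply/(pairwiseP 0) => i j /(mem_nth 0) /s_le ti _ _.
by rewrite ltnNge ti.
Qed.

Lemma avoids_above_cons_le t x u :
  x <= t -> avoids_above t (x :: u) = avoids_above x u.
Proof.
move=> xt; rewrite /avoids_above /= ltnNge xt (_ : all _ u = true); last exact/allP.
case pxu: (pairwise_above x u); last by rewrite andbF.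
by rewrite (pairwise_above_mono xt pxu) /= !andbT.
Qed.

Lemma avoids_above_cons_gt t x u : t < x ->
  avoids_above t (x :: u) = all (fun y => (t < y) ==> r x y) u && avoids_above t u.
Proof.
move=> tx; rewrite /avoids_above /= tx.
case pt: (pairwise_above t u); last by rewrite !andbF.
by rewrite (pairwise_above_mono (ltnW tx) pt) /= !andbT andbC.
Qed.

Lemma count_permutations_cons (P : pred (seq nat)) m : 0 < size m ->
  count P (permutations m) =
  \sum_(x <- undup m) count (fun u => P (x :: u)) (permutations (rem x m)).
Proof.
move=> m_gt0; rewrite (seq.permP (permutationsE m_gt0)) count_flatten sumnE !big_map.
by apply: eq_bigr => x _; rewrite count_map.
Qed.

Lemma count_permutations_cons_gt t x m : t < x ->
  count (fun u => avoids_above t (x :: u)) (permutations m) =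
  all (fun y => (t < y) ==> r x y) m * count (avoids_above t) (permutations m).
Proof.
move=> tx; rewrite (@eq_in_count _ _
  (fun u => all (fun y => (t < y) ==> r x y) m && avoids_above t u)); last first.
  move=> u; rewrite mem_permutations => m_u.
  by rewrite avoids_above_cons_gt // (perm_all _ m_u).
by case: all; rewrite ?mul1n ?mul0n ?count_pred0.
Qed.

Lemma avoidsP s : reflect
  (forall i j l, i < j -> j < l -> l < size s ->
     nth 0 s i < nth 0 s j -> nth 0 s i < nth 0 s l -> r (nth 0 s j) (nth 0 s l))
  (avoids s).
Proof.
elim: s => [|x u IHu] /=; first by constructor.
apply: (iffP andP) => [[/(pairwiseP 0) above /IHu avoid_u] [|i] [|j] [|l] //= ij jl lu|H].
- by move=> xj xl; apply: implyP xl; apply: implyP xj; apply: above (ltn_trans jl lu) lu jl.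
- exact: avoid_u.
split; last by apply/IHu => i j l ij jl lu; apply: (H i.+1 j.+1 l.+1).
apply/(pairwiseP 0) => j l ju lu jl; apply/implyP => xj; apply/implyP.
exact: (H 0 j.+1 l.+1).
Qed.

End Avoidance.

Section Extremal.

Variable r : rel nat.
Hypotheses (r_total : total r) (r_trans : transitive r) (r_anti : antisymmetric r).

Definition extremal (t : nat) (m : seq nat) : nat :=
  head 0 (sort r [seq y <- m | t < y]).

Lemma extremal_mem t m :
  has (fun y => t < y) m -> extremal t m \in [seq y <- m | t < y].
Proof.
move=> /hasP[y m_y ty]; rewrite -(mem_sort r) /extremal.
have : y \in sort r [seq y <- m | t < y] by rewrite mem_sort mem_filter ty m_y.
by case: sort => // z v _; apply: mem_head.
Qed.

Lemma extremal_min t m : all (fun y => (t < y) ==> r (extremal t m) y) m.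
Proof.
have sort_perm : perm_eq (sort r [seq y <- m | t < y]) [seq y <- m | t < y].
  by rewrite perm_sort.
rewrite -all_filter -(perm_all _ sort_perm) /extremal.
have := sort_sorted r_total [seq y <- m | t < y].
case: sort => //= x v /(order_path_min r_trans) ->.
by have := r_total x x; rewrite orbb => ->.
Qed.

Lemma sum_extremal (F : nat -> nat) t m :
  \sum_(x <- undup m | t < x) all (fun y => (t < y) ==> r x y) m * F x =
  has (fun y => t < y) m * F (extremal t m).
Proof.
rewrite -big_filter filter_undup.
have [m_gt|/hasPn m_le] := boolP (has _ m); last first.
  rewrite big1_seq // => x /andP[_]; rewrite mem_undup mem_filter.
  by case/andP=> tx /m_le; rewrite tx.
have e_in := extremal_mem m_gt; move: (e_in); rewrite mem_filter => /andP[te m_e].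
rewrite (bigD1_seq (extremal t m)) ?mem_undup ?undup_uniq //= extremal_min mul1n.
rewrite big1_seq ?addn0 // => x /andP[x_ne]; rewrite mem_undup mem_filter => /andP[tx m_x].
case x_min: all; rewrite ?mul0n //; case/eqP: x_ne; apply: r_anti.
by rewrite (implyP (allP x_min _ m_e) te) (implyP (allP (extremal_min t m) _ m_x) tx).
Qed.

Lemma sum_count_cons_gt t m :
  \sum_(x <- undup m | ~~ (x <= t))
     count (fun u => avoids_above r t (x :: u)) (permutations (rem x m)) =
  has (fun y => t < y) m * count (avoids_above r t) (permutations (rem (extremal t m) m)).
Proof.
rewrite -(sum_extremal (fun x => count (avoids_above r t) (permutations (rem x m)))).
rewrite big_seq_cond [RHS]big_seq_cond.
apply: eq_big => [x | x /andP[]]; first by rewrite ltnNge.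
rewrite mem_undup -ltnNge => m_x tx.
rewrite count_permutations_cons_gt // (perm_all _ (perm_to_rem m_x)) /= tx /=.
by have := r_total x x; rewrite orbb => ->.
Qed.

End Extremal.

Definition same_below (t : nat) (m m' : seq nat) : bool :=
  perm_eq [seq y <- m | y <= t] [seq y <- m' | y <= t].

Lemma same_below_mem t m m' x :
  same_below t m m' -> x <= t -> (x \in m) = (x \in m').
Proof. by move=> /perm_mem/(_ x); rewrite !mem_filter => + xt; rewrite xt. Qed.

Lemma same_below_le t1 t2 m m' :
  t1 <= t2 -> same_below t2 m m' -> same_below t1 m m'.
Proof.
move=> t12.
have sub s : [seq y <- [seq y <- s | y <= t2] | y <= t1] = [seq y <- s | y <= t1].
  rewrite -filter_predI; apply: eq_filter => y /=.
  by apply/andb_idr => /leq_trans; apply.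
by move=> /(perm_filter (fun y => y <= t1)); rewrite !sub.
Qed.

Lemma same_below_rem_le t x m m' : x <= t -> x \in m ->
  same_below t m m' -> same_below x (rem x m) (rem x m').
Proof.
move=> xt m_x sb; have m'_x : x \in m' by rewrite -(same_below_mem sb xt).
have := same_below_le xt sb; rewrite /same_below.
rewrite (permPl (perm_filter _ (perm_to_rem m_x))) (permPr (perm_filter _ (perm_to_rem m'_x))).
by rewrite [filter _ (x :: rem x m)]/= [filter _ (x :: rem x m')]/= leqnn perm_cons.
Qed.

Lemma same_below_rem_gt t x m : t < x -> x \in m -> same_below t (rem x m) m.
Proof.
move=> tx m_x; rewrite /same_below perm_sym.
by rewrite (permPl (perm_filter _ (perm_to_rem m_x))) [filter _ (x :: _)]/= leqNgt tx.
Qed.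

Lemma same_below_has_gt t m m' : same_below t m m' -> size m = size m' ->
  has (fun y => t < y) m = has (fun y => t < y) m'.
Proof.
have count_gt s : count (fun y => t < y) s = size s - size [seq y <- s | y <= t].
  rewrite size_filter -(count_predC (fun y => y <= t) s) addKn.
  by apply: eq_count => y; rewrite /= ltnNge.
by move=> /perm_size sb sz; rewrite !has_count !count_gt sb sz.
Qed.

Lemma big_undup_same_below t m m' (F : nat -> nat) : same_below t m m' ->
  \sum_(x <- undup m | x <= t) F x = \sum_(x <- undup m' | x <= t) F x.
Proof.
move=> sb; rewrite -[LHS]big_filter -[RHS]big_filter !filter_undup; apply: perm_big.
exact/perm_undup/perm_mem.
Qed.

Section Comparison.

Variables r1 r2 : rel nat.
Hypotheses (r1_total : total r1) (r1_trans : transitive r1) (r1_anti : antisymmetric r1).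
Hypotheses (r2_total : total r2) (r2_trans : transitive r2) (r2_anti : antisymmetric r2).

Lemma count_avoids_above_same_below t m m' :
  same_below t m m' -> size m = size m' ->
  count (avoids_above r1 t) (permutations m) =
  count (avoids_above r2 t) (permutations m').
Proof.
have [n] := ubnP (size m); elim: n => // n IHn in t m m' *; rewrite ltnS => m_le sb sz.
have [m_nil|m_gt0] := posnP (size m).
  by rewrite (size0nil m_nil) (size0nil (etrans (esym sz) m_nil)).
have m'_gt0 : 0 < size m' by rewrite -sz.
have rem_lt x : x \in m -> size (rem x m) < n.
  by move=> m_x; rewrite size_rem // (leq_trans _ m_le) // prednK.
rewrite [LHS]count_permutations_cons // [RHS]count_permutations_cons //.
rewrite [LHS](bigID (fun x => x <= t)) [RHS](bigID (fun x => x <= t)) /=.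
congr (_ + _).
  have low r s : \sum_(x <- undup s | x <= t)
      count (fun u => avoids_above r t (x :: u)) (permutations (rem x s)) =
    \sum_(x <- undup s | x <= t) count (avoids_above r x) (permutations (rem x s)).
    by apply: eq_bigr => x xt; apply: eq_count => u; apply: avoids_above_cons_le.
  rewrite !low -(big_undup_same_below _ sb) big_seq_cond [RHS]big_seq_cond.
  apply: eq_bigr => x /andP[]; rewrite mem_undup => m_x xt.
  apply: IHn; [exact: rem_lt m_x | exact: same_below_rem_le xt m_x sb |].
  by rewrite !size_rem -?(same_below_mem sb) // sz.
rewrite !sum_count_cons_gt // (same_below_has_gt sb sz).
have [m'_gt|] := boolP (has _ m'); rewrite ?mul0n // !mul1n.
have m_gt : has (fun y => t < y) m by rewrite (same_below_has_gt sb sz).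
move: (extremal_mem r1 m_gt) (extremal_mem r2 m'_gt); rewrite !mem_filter.
move=> /andP[t_e1 m_e1] /andP[t_e2 m'_e2].
apply: IHn; first exact: rem_lt m_e1.
  apply: perm_trans (same_below_rem_gt t_e1 m_e1) _.
  by apply: perm_trans sb _; rewrite perm_sym; apply: same_below_rem_gt.
by rewrite !size_rem // sz.
Qed.

Lemma count_avoids_permutations m :
  count (avoids r1) (permutations m) = count (avoids r2) (permutations m).
Proof.
pose t := \max_(y <- m) y.
have avoids_above_max r : {in permutations m, avoids r =1 avoids_above r t}.
  move=> s; rewrite mem_permutations => /perm_mem s_m; rewrite /avoids_above.
  rewrite pairwise_above_le ?andbT //; apply/allP => y; rewrite s_m => m_y.
  exact: leq_bigmax_seq.
rewrite !(eq_in_count (avoids_above_max _)).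
by apply: count_avoids_above_same_below => //; apply: perm_refl.
Qed.

End Comparison.

Lemma perm_count_memP (T : eqType) (s t : seq T) :
  reflect (forall x, count_mem x s = count_mem x t) (perm_eq s t).
Proof.
apply: (iffP idP) => [/seq.permP eq_st x | ]; first exact: eq_st.
elim: s t => [|x s IHs] t eq_st.
  by case: t eq_st => // y t /(_ y); rewrite /= eqxx.
have t_x : x \in t by rewrite -has_pred1 has_count -eq_st /= eqxx.
rewrite (permPr (perm_to_rem t_x)) perm_cons; apply: IHs => y.
by rewrite count_mem_rem -eq_st /= addKn.
Qed.

Section Words.

Variables N k : nat.
Implicit Type w : {ffun 'I_N -> 'I_k}.

Definition word w : seq nat := [seq val (w i) | i <- enum 'I_N].

Definition blocks w : {ffun 'I_k -> {set 'I_N}} := [ffun i => [set x | w x == i]].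

(* An occurrence of 123 (for [r = geq]) or of 132 (for [r = leq]) at p < q < l. *)
Definition occurs (r : rel nat) w : bool :=
  [exists p : 'I_N, exists q : 'I_N, exists l : 'I_N,
     [&& p < q, q < l, w p < w q, w p < w l & ~~ r (w q) (w l)]].

Lemma size_word w : size (word w) = N.
Proof. by rewrite size_map size_enum_ord. Qed.

Lemma nth_word w (i : 'I_N) : nth 0 (word w) i = w i.
Proof. by rewrite (nth_map i) ?size_enum_ord // nth_ord_enum. Qed.

Lemma word_inj : injective word.
Proof.
move=> w1 w2 eq_w; apply/ffunP => i; apply: ord_inj.
by rewrite -!nth_word eq_w.
Qed.

Lemma word_lt w : all (fun y => y < k) (word w).
Proof. by apply/allP => y /mapP[i _ ->]; apply: ltn_ord. Qed.

Lemma word_surj s : size s = N -> all (fun y => y < k) s -> {w | word w = s}.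
Proof.
move=> size_s /allP s_lt.
have lt_k (i : 'I_N) : nth 0 s i < k by rewrite s_lt // mem_nth // size_s.
exists [ffun i => Ordinal (lt_k i)]; apply: (@eq_from_nth _ 0) => [|i].
  by rewrite size_word.
by rewrite size_word => lt_iN; rewrite (nth_word _ (Ordinal lt_iN)) ffunE.
Qed.

Lemma avoids_word r w : avoids r (word w) = ~~ occurs r w.
Proof.
apply/(avoidsP r)/negP => [avoid | no_occ i j l ij jl].
  case/existsP=> p /existsP[q /existsP[l /and5P[pq ql wpq wpl]]]; apply/negP/negPn.
  by have := avoid p q l pq ql; rewrite size_word !nth_word; apply.
rewrite size_word => lN; have jN := ltn_trans jl lN; have iN := ltn_trans ij jN.
rewrite (nth_word _ (Ordinal iN)) (nth_word _ (Ordinal jN)) (nth_word _ (Ordinal lN)).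
move=> wij wil; apply/negPn/negP => not_r; apply: no_occ.
apply/existsP; exists (Ordinal iN); apply/existsP; exists (Ordinal jN).
by apply/existsP; exists (Ordinal lN); rewrite /= ij jl wij wil.
Qed.

Lemma count_mem_word w (i : 'I_k) : count_mem (val i) (word w) = #|blocks w i|.
Proof.
rewrite /word count_map ffunE cardsE cardE [in RHS]/enum_mem size_filter -enumT.
by apply: eq_count => x; rewrite /= val_eqE.
Qed.

Lemma card_words m (P : pred (seq nat)) :
  size m = N -> all (fun y => y < k) m ->
  #|[set w | perm_eq (word w) m && P (word w)]| = count P (permutations m).
Proof.
move=> size_m m_lt.
have -> : #|[set w | perm_eq (word w) m && P (word w)]| =
    count P [seq s <- map word (enum {ffun 'I_N -> 'I_k}) | perm_eq s m].
  rewrite count_filter count_map cardsE cardE [in LHS]/enum_mem size_filter -enumT.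
  by apply: eq_count => w; rewrite /= andbC.
apply/seq.permP/uniq_perm; [|exact: permutations_uniq|].
  by apply: filter_uniq; rewrite map_inj_uniq ?enum_uniq //; apply: word_inj.
move=> s; rewrite mem_filter mem_permutations andb_idr // => s_m.
have [w <-] := word_surj (etrans (perm_size s_m) size_m) (etrans (perm_all _ s_m) m_lt).
by rewrite map_f ?mem_enum.
Qed.

Lemma blocks_inj : injective blocks.
Proof.
move=> w1 w2 eq_B; apply/ffunP => x.
have : x \in blocks w2 (w1 x) by rewrite -eq_B ffunE inE.
by rewrite ffunE inE => /eqP.
Qed.

Lemma blocks_partition w :
  [forall i, blocks w i != set0] -> ordered_set_partition (blocks w).
Proof.
move=> nonempty; apply/and3P; split=> //.
  apply/forallP => i; apply/forallP => j; apply/implyP => ij; rewrite !ffunE.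
  rewrite -setI_eq0; apply/eqP/setP => x; rewrite !inE.
  by apply/negP => /andP[/eqP wi /eqP wj]; rewrite -wi -wj eqxx in ij.
apply/eqP/setP => x; rewrite inE; apply/bigcupP; exists (w x) => //.
by rewrite ffunE inE.
Qed.

Lemma partition_blocks (B : {ffun 'I_k -> {set 'I_N}}) :
  ordered_set_partition B -> {w | B = blocks w}.
Proof.
case/and3P => _ /forallP disj /eqP cover.
have block_of x : {i | x \in B i}.
  apply/sigW; have : x \in \bigcup_(i < k) B i by rewrite cover inE.
  by case/bigcupP => i _; exists i.
exists [ffun x => sval (block_of x)]; apply/ffunP => i; apply/setP => x.
rewrite ffunE inE ffunE; case: (block_of x) => j /= x_j.
apply/idP/eqP => [x_i | <- //]; apply/eqP; apply: contraT => ji.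
by have /implyP/(_ ji)/disjointFr/(_ x_j) := forallP (disj j) i; rewrite x_i.
Qed.

Lemma contains_pattern_blocks m (rho : {perm 'I_m}) w :
  contains_pattern (blocks w) rho =
  [exists e : {ffun 'I_m -> 'I_N}, [forall a, forall c,
     ((e a < e c) == (rho a < rho c)) && ((a < c) ==> (w (e a) < w (e c)))]].
Proof.
apply/existsP/existsP => [[ix /existsP[e /and3P[/forallP ix_mono /forallP e_in rho_e]]] | [e]].
  have w_e j : w (e j) = ix j by have := e_in j; rewrite ffunE inE => /eqP.
  exists e; apply/forallP => a; apply/forallP => c.
  by rewrite (forallP (forallP rho_e a) c) !w_e (forallP (ix_mono a) c).
move=> /forallP e_ok; exists [ffun j => w (e j)]; apply/existsP; exists e.
apply/and3P; split.
- by apply/forallP => a; apply/forallP => c; rewrite !ffunE; case/andP: (forallP (e_ok a) c).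
- by apply/forallP => j; rewrite !ffunE inE.
- by apply/forallP => a; apply/forallP => c; case/andP: (forallP (e_ok a) c).
Qed.

Lemma contains_pattern123 w : contains_pattern (blocks w) pat123 = occurs geq w.
Proof.
rewrite contains_pattern_blocks; apply/existsP/existsP => [[e /forallP e_ok] | [p]].
  have h a c := forallP (e_ok a) c.
  pose o0 := @Ordinal 3 0 isT; pose o1 := @Ordinal 3 1 isT; pose o2 := @Ordinal 3 2 isT.
  move: (h o0 o1) (h o1 o2); rewrite /pat123 !perm1 /= => h01 h12.
  exists (e o0); apply/existsP; exists (e o1); apply/existsP; exists (e o2); rewrite /=.
  lia.
move=> /existsP[q /existsP[l occ]].
exists [ffun j : 'I_3 => nth p [:: p; q; l] j].
apply/forallP => -[[|[|[|//]]] ?]; apply/forallP => -[[|[|[|//]]] ?];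
  rewrite !ffunE /pat123 !perm1 /=; lia.
Qed.

Lemma pat132E (a : 'I_3) : pat132 a = nth 0 [:: 0; 2; 1] a :> nat.
Proof. by rewrite permE; case: a => -[|[|[|]]]. Qed.

Lemma contains_pattern132 w : contains_pattern (blocks w) pat132 = occurs leq w.
Proof.
rewrite contains_pattern_blocks; apply/existsP/existsP => [[e /forallP e_ok] | [p]].
  have h a c := forallP (e_ok a) c.
  pose o0 := @Ordinal 3 0 isT; pose o1 := @Ordinal 3 1 isT; pose o2 := @Ordinal 3 2 isT.
  move: (h o0 o1) (h o0 o2) (h o2 o1) (h o1 o2); rewrite !pat132E /= => h01 h02 h21 h12.
  exists (e o0); apply/existsP; exists (e o2); apply/existsP; exists (e o1); rewrite /=.
  lia.
move=> /existsP[q /existsP[l occ]].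
exists [ffun j : 'I_3 => nth p [:: p; l; q] j].
apply/forallP => -[[|[|[|//]]] ?]; apply/forallP => -[[|[|[|//]]] ?];
  rewrite !ffunE !pat132E /=; lia.
Qed.

End Words.

Section Content.

Variables (k : nat) (b : 'I_k -> nat).

Definition content_seq : seq nat := flatten [seq nseq (b i) (val i) | i <- enum 'I_k].

Lemma count_mem_content_seq (i : 'I_k) : count_mem (val i) content_seq = b i.
Proof.
rewrite count_flatten sumnE !big_map -enumT big_enum (bigD1 i) //= count_nseq /= eqxx mul1n.
by rewrite big1 ?addn0 // => j ji; rewrite count_nseq /= val_eqE (negbTE ji).
Qed.

Lemma content_seq_lt : all (fun y => y < k) content_seq.
Proof. by apply/allP => y /flattenP[s /mapP[i _ ->] /nseqP[-> _]]; apply: ltn_ord. Qed.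

Lemma size_content_seq : size content_seq = \sum_(i < k) b i.
Proof.
rewrite size_flatten /shape -map_comp sumnE big_map big_enum.
by apply: eq_bigr => i _; rewrite /= size_nseq.
Qed.

Lemma block_sizes_word N (w : {ffun 'I_N -> 'I_k}) :
  [forall i, #|blocks w i| == b i] = perm_eq (word w) content_seq.
Proof.
apply/forallP/perm_count_memP => [sizes y | eq_count i].
  have [y_lt|y_ge] := ltnP y k.
    by rewrite -[y]/(val (Ordinal y_lt)) count_mem_word count_mem_content_seq (eqP (sizes _)).
  have not_in s : all (fun y => y < k) s -> count_mem y s = 0.
    by move=> /allP s_lt; apply/count_memPn; apply: contraL y_ge => /s_lt; rewrite -ltnNge.
  by rewrite !not_in ?word_lt ?content_seq_lt.
by rewrite -count_mem_word eq_count count_mem_content_seq.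
Qed.

Lemma op_blocks m (rho : {perm 'I_m}) : (forall i, 0 < b i) ->
  op b rho = #|[set w : {ffun 'I_(\sum_(i < k) b i) -> 'I_k} |
                [forall i, #|blocks w i| == b i] && ~~ contains_pattern (blocks w) rho]|.
Proof.
move=> b_gt0; rewrite /op -(card_imset _ (@blocks_inj _ _)); apply: eq_card => B.
rewrite inE; apply/and3P/imsetP => [[/partition_blocks[w ->] sizes avoid] | [w]].
  by exists w; rewrite // inE sizes.
rewrite inE => /andP[sizes avoid] ->; split=> //; apply: blocks_partition.
by apply/forallP => i; rewrite -card_gt0 (eqP (forallP sizes i)).
Qed.

Lemma op_count_avoids r m (rho : {perm 'I_m}) : (forall i, 0 < b i) ->
  (forall w : {ffun 'I_(\sum_(i < k) b i) -> 'I_k},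
     contains_pattern (blocks w) rho = occurs r w) ->
  op b rho = count (avoids r) (permutations content_seq).
Proof.
move=> b_gt0 pattern_occurs; rewrite op_blocks //.
rewrite -(card_words (avoids r) size_content_seq content_seq_lt).
by apply: eq_card => w; rewrite !inE block_sizes_word pattern_occurs avoids_word.
Qed.

End Content.

Lemma geq_total : total geq.
Proof. by move=> x y; apply: leq_total. Qed.

Lemma geq_trans : transitive geq.
Proof. by move=> y x z /= yx zy; apply: leq_trans zy yx. Qed.

Lemma anti_geq : antisymmetric geq.
Proof. by move=> x y le_xy; apply: anti_leq; rewrite andbC. Qed.

Theorem theorem7 (k : nat) (b : 'I_k -> nat) :
  (forall i, 0 < b i) -> op b pat123 = op b pat132.
Proof.
move=> b_gt0.
rewrite (op_count_avoids (r := geq) b_gt0 (@contains_pattern123 _ _)).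
rewrite (op_count_avoids (r := leq) b_gt0 (@contains_pattern132 _ _)).
apply: (count_avoids_permutations geq_total geq_trans anti_geq leq_total leq_trans anti_leq).
Qed.
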